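(* Assume $Spr(\beta)$. Then $(\mathcal{F}_\beta,=)\models\forall\mathsf{x}[D(\mathsf{x})]$ (i.e. $\forall\alpha,\gamma\in\mathcal{F}_\beta[\alpha=\gamma\vee\neg(\alpha=\gamma)]$) if and only if there exists $\varphi$ with $\varphi:\mathcal{F}_\beta\hookrightarrow\omega$.
   Context: Intuitionistic mathematics (constructive reading of logical constants; Markov's Principle not assumed). Axioms assumed: Brouwer's Continuity Principle (for every $R\subseteq\mathcal{N}\times\omega$, if $\forall\alpha\exists n[\alpha R n]$ then $\forall\alpha\exists m\exists n\forall\beta[\overline{\alpha}m\sqsubset\beta\rightarrow\beta R n]$) and the First Axiom of Continuous Choice (for every $R\subseteq\mathcal{N}\times\omega$, if $\forall\alpha\exists n[\alpha R n]$ then there is $\varphi:\mathcal{N}\rightarrow\omega$, in the sense defined below with $\mathcal{F}_\beta=\mathcal{N}$, such that $\forall\alpha[\alpha R\varphi(\alpha)]$). $\mathcal{N}=\omega^\omega$; finite sequences are coded by naturals, $\overline{\alpha}p=\langle\alpha(0),\dots,\alpha(p-1)\rangle$, $s\sqsubset\alpha$ means $s$ is an initial segment of $\alpha$. $\mathcal{F}_\beta:=\{\alpha\mid\forall n[\beta(\overline{\alpha}n)=0]\}$; $Spr(\beta)$ iff $\forall s[\beta(s)=0\leftrightarrow\exists n[\beta(s\ast\langle n\rangle)=0]]$. $D(\mathsf{x})$ is the formula $\forall\mathsf{y}[\mathsf{x}=\mathsf{y}\vee\neg(\mathsf{x}=\mathsf{y})]$. For $\varphi\in\mathcal{N}$: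 $\varphi:\mathcal{F}_\beta\rightarrow\omega$ iff $\forall\alpha\in\mathcal{F}_\beta\exists p[\varphi(\overline{\alpha}p)\neq0]$, and then $\varphi(\alpha)$ is the $z$ with $\varphi(\overline{\alpha}q)=z+1$ where $q$ is the least $p$ with $\varphi(\overline{\alpha}p)\neq0$. $\varphi:\mathcal{F}_\beta\hookrightarrow\omega$ iff $\varphi:\mathcal{F}_\beta\rightarrow\omega$ and $\forall\alpha,\delta\in\mathcal{F}_\beta[\alpha\#\delta\rightarrow\varphi(\alpha)\neq\varphi(\delta)]$, where $\alpha\#\delta$ means $\exists n[\alpha(n)\neq\delta(n)]$. *)

From mathcomp Require Import all_boot.
Set Implicit Arguments.
Unset Strict Implicit.
Unset Printing Implicit Defensive.

Definition baire := nat -> nat.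

Definition seqcode (s : seq nat) : nat := CodeSeq.code s.
Definition seqdecode (n : nat) : seq nat := CodeSeq.decode n.

Definition prefix (a : baire) (p : nat) : nat := seqcode (mkseq a p).

Definition ext1 (s n : nat) : nat := seqcode (rcons (seqdecode s) n).

Definition extends_prefix (a : baire) (m : nat) (b : baire) : Prop :=
  forall i, i < m -> b i = a i.

Definition beq (a g : baire) : Prop := forall n, a n = g n.
Definition apart (a g : baire) : Prop := exists n, a n <> g n.

Definition Fb (beta : baire) (a : baire) : Prop := forall n, beta (prefix a n) = 0.

Definition Spr (beta : baire) : Prop :=
  forall s, beta s = 0 <-> exists n, beta (ext1 s n) = 0.

Definition isfun (F : baire -> Prop) (phi : baire) : Prop :=
  forall a, F a -> exists p, phi (prefix a p) <> 0.

(* phi(alpha) = z : phi(\overline{alpha} q) = z+1 with q least such that it is nonzero *)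
Definition fval (phi : baire) (a : baire) (z : nat) : Prop :=
  exists q, phi (prefix a q) = z.+1 /\ forall p, p < q -> phi (prefix a p) = 0.

Definition isinj (F : baire -> Prop) (phi : baire) : Prop :=
  isfun F phi /\
  forall a d, F a -> F d -> apart a d ->
    forall z w, fval phi a z -> fval phi d w -> z <> w.

Definition BCP : Prop :=
  forall R : baire -> nat -> Prop,
    (forall a, exists n, R a n) ->
    forall a, exists m n, forall b, extends_prefix a m b -> R b n.

Definition AC10 : Prop :=
  forall R : baire -> nat -> Prop,
    (forall a, exists n, R a n) ->
    exists phi, isfun (fun _ => True) phi /\ forall a z, fval phi a z -> R a z.

From Pilot Require Import Defs.
From mathcomp Require Import all_boot.

(* If [beta] is a spread with nonempty root, [F_beta] is a retract [r] of Baire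
   space: copy [g] while it stays in the spread and, where it would leave it,
   continue with a chosen admissible successor.  Given decidable equality on
   [F_beta], "[r g = a] or not" is then a total relation on Baire space, so the
   Continuity Principle makes its answer constant on a neighbourhood of [a]:
   every point of [F_beta] is isolated by one of its prefixes.  Continuous
   choice assigns to each [g] the code of an isolating prefix of [r g]; a code
   determines its length, so two points of [F_beta] with the same value share
   an isolating prefix and coincide.  Conversely, an injection into [omega]
   decides equality, because two sequences of naturals that are not apart are
   equal. *)

Lemma prefix_beq {a g} m : beq a g -> Defs.prefix a m = Defs.prefix g m.
Proof. by move=> Eag; rewrite /Defs.prefix (eq_mkseq Eag). Qed.

Lemma prefix_inj {a d m n} :
  Defs.prefix a m = Defs.prefix d n -> m = n /\ extends_prefix a m d.
Proof.
rewrite /Defs.prefix /seqcode => /(can_inj CodeSeq.codeK) Ead.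
have Emn : m = n by have := congr1 size Ead; rewrite !size_mkseq.
subst n; split=> // i lt_im.
by have := congr1 (nth 0 ^~ i) Ead; rewrite !nth_mkseq.
Qed.

Lemma ext1_code s k : ext1 (seqcode s) k = seqcode (rcons s k).
Proof. by rewrite /ext1 /seqdecode /seqcode CodeSeq.codeK. Qed.

Lemma not_apart_beq a g : ~ apart a g -> beq a g.
Proof.
by move=> Nag n; case: (eqVneq (a n) (g n)) => // /eqP Nn; case: Nag; exists n.
Qed.

Lemma fval_beq {phi a g z} : beq a g -> fval phi a z -> fval phi g z.
Proof.
move=> Eag [q [phi_q phi_lt_q]].
exists q; split=> [|p lt_pq]; rewrite -(prefix_beq _ Eag) //; exact: phi_lt_q.
Qed.

Lemma fval_uniq {phi a z w} : fval phi a z -> fval phi a w -> z = w.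
Proof.
move=> [q [phi_q phi_lt_q]] [q' [phi_q' phi_lt_q']].
case: (ltngtP q q') => [lt_qq'|lt_q'q|Eqq']; last subst q'.
- by move: (phi_lt_q' _ lt_qq'); rewrite phi_q.
- by move: (phi_lt_q _ lt_q'q); rewrite phi_q'.
- by move: phi_q; rewrite phi_q' => -[].
Qed.

Lemma fval_exists {phi a} :
  (exists p, phi (Defs.prefix a p) <> 0) -> exists z, fval phi a z.
Proof.
move=> phi_a.
have phi_a' : exists p, phi (Defs.prefix a p) != 0.
  by case: phi_a => p /eqP phi_p; exists p.
case: (ex_minnP phi_a') => q /eqP phi_q q_min.
exists (phi (Defs.prefix a q)).-1, q; split; first by case: (phi (Defs.prefix a q)) phi_q.
move=> p lt_pq; apply/eqP; apply: contraTT lt_pq => /q_min.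
by rewrite -leqNgt.
Qed.

Lemma isinj_beq_dec F phi :
  isinj F phi -> forall a g, F a -> F g -> beq a g \/ ~ beq a g.
Proof.
move=> [phi_fun phi_inj] a g Fa Fg.
have [z phi_a] := fval_exists (phi_fun a Fa).
have [w phi_g] := fval_exists (phi_fun g Fg).
case: (eqVneq z w) => [Ezw|/eqP Nzw].
- by left; apply: not_apart_beq => Aag; exact: (phi_inj a g Fa Fg Aag z w).
- by right=> Eag; apply: Nzw; apply: fval_uniq (fval_beq Eag phi_a) phi_g.
Qed.

Lemma isinj_empty F : (forall a, ~ F a) -> isinj F (fun _ => 1).
Proof. by move=> F0; split=> [a /F0|a d /F0]. Qed.

Lemma Spr_successor {beta} :
  Spr beta -> {f : nat -> nat | forall s, beta s = 0 -> beta (ext1 s (f s)) = 0}.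
Proof.
move=> spr.
have succ s : {n | beta s = 0 -> beta (ext1 s n) = 0}.
  case: (eqVneq (beta s) 0) => [beta_s|/negbTE beta_s]; last first.
    by exists 0 => /eqP; rewrite beta_s.
  have ex_n : exists n, beta (ext1 s n) == 0.
    by case: (proj1 (spr s) beta_s) => n /eqP; exists n.
  by exists (ex_minn ex_n) => _; case: (ex_minnP ex_n) => n /eqP.
by exists (fun s => sval (succ s)) => s; exact: svalP (succ s).
Qed.

Section Retraction.

Variables (beta : baire) (f : nat -> nat).

Definition retract_step s k := if beta (ext1 s k) == 0 then k else f s.

Fixpoint retract_seq (g : baire) n : seq nat :=
  if n is n'.+1 then
    let s := retract_seq g n' in rcons s (retract_step (seqcode s) (g n'))
  else [::].

Definition retract g : baire := fun i => nth 0 (retract_seq g i.+1) i.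

Lemma size_retract_seq g n : size (retract_seq g n) = n.
Proof. by elim: n => //= n IHn; rewrite size_rcons IHn. Qed.

Lemma nth_retract_seq g n i : i < n -> nth 0 (retract_seq g n) i = retract g i.
Proof.
elim: n => // n IHn; rewrite ltnS leq_eqVlt => /predU1P[->|lt_in].
- by rewrite /retract.
- by rewrite /= nth_rcons size_retract_seq lt_in IHn.
Qed.

Lemma prefix_retract g n : Defs.prefix (retract g) n = seqcode (retract_seq g n).
Proof.
rewrite /Defs.prefix; congr seqcode.
apply: (@eq_from_nth _ 0); first by rewrite size_mkseq size_retract_seq.
by move=> i; rewrite size_mkseq => lt_in; rewrite nth_mkseq // nth_retract_seq.
Qed.

Lemma Fb_retract g :
  beta (seqcode [::]) = 0 ->
  (forall s, beta s = 0 -> beta (ext1 s (f s)) = 0) ->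
  Fb beta (retract g).
Proof.
move=> beta_nil f_succ n; rewrite prefix_retract.
elim: n => //= n IHn; rewrite -ext1_code /retract_step.
by case: eqP => // _; exact: f_succ.
Qed.

Lemma retract_seq_Fb a n : Fb beta a -> retract_seq a n = mkseq a n.
Proof.
move=> Fa; elim: n => //= n IHn.
rewrite IHn /retract_step ext1_code -mkseqS.
by rewrite -[seqcode _]/(Defs.prefix a n.+1) Fa eqxx mkseqS.
Qed.

Lemma retract_Fb a : Fb beta a -> beq (retract a) a.
Proof. by move=> Fa i; rewrite /retract retract_seq_Fb // nth_mkseq. Qed.

End Retraction.

Definition isolates (F : baire -> Prop) (a : baire) (m : nat) : Prop :=
  forall d, F d -> extends_prefix a m d -> beq d a.

Section DiscreteRetract.

Context {F : baire -> Prop} {r : baire -> baire}.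
Hypotheses (F_r : forall g, F (r g)) (r_id : forall a, F a -> beq (r a) a).

Lemma retract_isolated :
  BCP -> (forall a g, F a -> F g -> beq a g \/ ~ beq a g) ->
  forall a, F a -> exists m, isolates F a m.
Proof.
move=> bcp F_dec a Fa.
have total g : exists b, b = 0 <-> beq (r g) a.
  case: (F_dec _ _ (F_r g) Fa) => [Ega|Nga]; first by exists 0.
  by exists 1; split=> // /Nga.
have [m [b near_a]] := bcp _ total a.
have b0 : b = 0 by apply/(near_a a) => //; exact: r_id.
exists m => d Fd ext_d i.
by rewrite -(r_id _ Fd i); apply: (proj1 (near_a d ext_d) b0).
Qed.

Lemma isolated_isinj :
  AC10 -> (forall a, F a -> exists m, isolates F a m) -> exists phi, isinj F phi.
Proof.
move=> ac F_isolated.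
pose R g c := exists m, c = Defs.prefix (r g) m /\ isolates F (r g) m.
have total g : exists c, R g c.
  by have [m iso_m] := F_isolated _ (F_r g); exists (Defs.prefix (r g) m), m.
have [phi [phi_fun phi_R]] := ac R total.
exists phi; split=> [a _|a d Fa Fd [n Nn] z w phi_a phi_d Ezw]; first exact: phi_fun.
subst w.
have [m [Ez iso_m]] := phi_R a z phi_a.
have [m' [Ez' _]] := phi_R d z phi_d.
have [_ ext_m] := prefix_inj (etrans (esym Ez) Ez').
by apply: Nn; rewrite -(r_id _ Fa n) -(r_id _ Fd n) (iso_m _ (F_r d) ext_m).
Qed.

End DiscreteRetract.

Theorem theorem5p11 (beta : baire) :
  BCP -> AC10 -> Spr beta ->
  ((forall a g, Fb beta a -> Fb beta g -> beq a g \/ ~ beq a g) <->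
   exists phi, isinj (Fb beta) phi).
Proof.
move=> bcp ac spr; split; last by move=> [phi]; exact: isinj_beq_dec.
move=> F_dec.
case: (eqVneq (beta (seqcode [::])) 0) => [beta_nil|/eqP beta_nil]; last first.
  by exists (fun _ => 1); apply: isinj_empty => a Fa; apply: beta_nil (Fa 0).
have [f f_succ] := Spr_successor spr.
have F_r g : Fb beta (retract beta f g) by exact: Fb_retract.
have r_id a : Fb beta a -> beq (retract beta f a) a by exact: retract_Fb.
apply: (isolated_isinj F_r r_id ac).
exact: (retract_isolated F_r r_id bcp F_dec).
Qed.
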